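(* Let $P$ be a natural unit interval order on $[n]$ with Catalan path $C$, and let $\widetilde{C}$ be the reflection of $C$ about the line $y=n-x$ (which is again a Catalan path from $(0,0)$ to $(n,n)$). Let $\widetilde{P}$ be the natural unit interval order whose Catalan path is $\widetilde{C}$, and let $G=\mathrm{inc}(P)$, $\widetilde{G}=\mathrm{inc}(\widetilde{P})$. Then $X_G(\mathbf{x},t)=X_{\widetilde{G}}(\mathbf{x},t)$.
   Context: A natural unit interval order $P(m_1,\dots,m_{n-1})$ is defined for integers $m_1\le m_2\le\cdots\le m_{n-1}\le n$ with $m_i\ge i$ for all $i$: it is the poset on $[n]$ with $i<_P j$ iff $i<n$ and $j\in\{m_i+1,\dots,n\}$. Its incomparability graph $\mathrm{inc}(P)$ has vertex set $[n]$ and an edge $\{i,j\}$ ($i<j$) iff $j\le m_i$. The Catalan path of $P$ is the lattice path from $(0,0)$ to $(n,n)$ with unit north and east steps whose $i$-th east step lies on the line $y=m_i$ for $i=1,\dots,n-1$ and whose last east step lies on $y=n$; this gives a bijection between natural unit interval orders on $[n]$ and lattice paths from $(0,0)$ to $(n,n)$ staying weakly above $y=x$. For a graph $G$ with vertex set $V\subset\mathbb{P}$, the chromatic quasisymmetric function is $X_G(\mathbf{x},t)=\sum_\kappa t^{\mathrm{asc}(\kappa)}\mathbf{x}_\kappa$, summed over proper colorings $\kappa:V\to\mathbb{P}$, where $\mathbf{x}_\kappa=\prod_{v\in V}x_{\kappa(v)}$ and $\mathrm{asc}(\kappa)$ is the number of edges $\{i,j\}$ with $i<j$ and $\kappa(i)<\kappa(j)$.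 *)

From HB Require Import structures.
From mathcomp Require Import all_boot all_order all_algebra.
Set Implicit Arguments. Unset Strict Implicit. Unset Printing Implicit Defensive.
Import GRing.Theory.
Local Open Scope ring_scope.

(* Natural unit interval order P(m_1,...,m_{n-1}) on [n], encoded by the list
   m = [:: m_1; ...; m_{n-1}] (so m_i = nth 0 m i.-1, 1-based). *)
Definition nuio (n : nat) (m : seq nat) : bool :=
  [&& size m == n.-1, sorted leq m, all (fun x => x <= n)%N m &
      [forall i : 'I_(n.-1), (i.+1 <= nth 0%N m i)%N]].

(* Catalan path: sequence of unit steps, true = North, false = East.
   The path N^{h_1} E N^{h_2-h_1} E ... N^{h_n-h_{n-1}} E, where
   h = [:: m_1; ...; m_{n-1}; n], is the unique lattice path whose i-th east
   step lies on y = m_i (and whose last east step lies on y = n). *)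
Definition catalan_path (n : nat) (m : seq nat) : seq bool :=
  flatten [seq rcons (nseq d true) false
          | d <- pairmap (fun a b => (b - a)%N) 0%N (rcons m n)].

(* Reflection of a lattice path from (0,0) to (n,n) about the line y = n - x:
   (x,y) |-> (n-y, n-x); traversed from (0,0), step k of the new path is the
   (2n+1-k)-th step of the old path with North and East exchanged. *)
Definition reflect_path (s : seq bool) : seq bool := rev (map negb s).

(* Incomparability graph inc(P(m)) on [n]; vertex v : 'I_n stands for v+1.
   {i,j} with i<j (1-based) is an edge iff j <= m_i. *)
Definition inc_graph (n : nat) (m : seq nat) : rel 'I_n :=
  fun a b => ((a < b)%N && (b < nth 0%N m a)%N) || ((b < a)%N && (a < nth 0%N m b)%N).

(* Colorings with colors in {1,...,N}: color c : 'I_N stands for c+1. *)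
Definition proper_col (n N : nat) (G : rel 'I_n) (k : {ffun 'I_n -> 'I_N}) : bool :=
  [forall i, forall j, G i j ==> (k i != k j)].

Definition asc (n N : nat) (G : rel 'I_n) (k : {ffun 'I_n -> 'I_N}) : nat :=
  #|[set p : 'I_n * 'I_n | [&& (p.1 < p.2)%N, G p.1 p.2 & (k p.1 < k p.2)%N]]|.

(* Coefficient in X_G(x,t) of the monomial x_1^{alpha_0} ... x_N^{alpha_{N-1}}:
   the polynomial in t  sum_{proper kappa with x_kappa = that monomial} t^asc(kappa).
   Every monomial in x_1, x_2, ... arises for some N, so X_G is determined by
   (and equal to) this coefficient function. *)
Definition chromQS_coef (n : nat) (G : rel 'I_n) (N : nat) (alpha : 'I_N -> nat)
  : {poly int} :=
  \sum_(k : {ffun 'I_n -> 'I_N} | proper_col G k &&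
          [forall c : 'I_N, #|[set v | k v == c]| == alpha c]) 'X^(asc G k).

From mathcomp Require Import all_boot all_algebra all_fingroup zify.
From Stdlib Require Setoid.
Set Implicit Arguments. Unset Strict Implicit. Unset Printing Implicit Defensive.

(* Reflecting the Catalan path about y = n - x reverses the order, so inc(P~)
   is inc(P) with its vertices relabelled by i |-> n + 1 - i.  Reversing the
   vertices and the colours together preserves proper colourings and ascents,
   so X_{inc(P~)} is X_{inc(P)} with the variables x_1, ..., x_N reversed, and
   it remains to see that X_G is symmetric for G = inc(P).  The graph G has the
   interval property (a < b < d and ad in G give ab, bd in G), and a proper
   colouring has no triangle in the two colours c and c + 1; so these colours
   induce disjoint increasing paths ("runs") along which they alternate.
   Swapping c and c + 1 on the runs with an odd number of vertices is an
   involution of the proper colourings that keeps the ascents and exchanges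
   the multiplicities of c and c + 1.  Adjacent transpositions generate all
   permutations of the colours. *)

Lemma card_in_bij (T T' : finType) (A : {pred T}) (B : {pred T'})
    (f : T -> T') (g : T' -> T) :
  {in A, forall x, f x \in B} -> {in B, forall y, g y \in A} ->
  {in A, cancel f g} -> {in B, cancel g f} -> #|A| = #|B|.
Proof.
move=> fAB gBA fK gK; apply/eqP; rewrite eqn_leq; apply/andP; split.
  rewrite -(card_in_image (can_in_inj fK)) subset_leq_card //.
  by apply/subsetP => _ /imageP [x Ax ->]; exact: fAB.
rewrite -(card_in_image (can_in_inj gK)) subset_leq_card //.
by apply/subsetP => _ /imageP [y By ->]; exact: gBA.
Qed.

Lemma card_setID (T : finType) (P Q : pred T) :
  #|[set x | P x]| = #|[set x | P x && Q x]| + #|[set x | P x && ~~ Q x]|.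
Proof.
by rewrite -(cardsID [set x | Q x]); congr (_ + _); apply: eq_card => x; rewrite !inE andbC.
Qed.

Lemma iter_invariant (T U : Type) (f : T -> T) (F : T -> U) :
  (forall x, F (f x) = F x) -> forall i x, F (iter i f x) = F x.
Proof. by move=> Ff; elim=> //= i IH x; rewrite Ff IH. Qed.

Lemma iter_measure_fixed (T : eqType) (f : T -> T) (mu : T -> nat) (B : nat) :
  (forall x, mu x < B) -> (forall x, f x != x -> mu x < mu (f x)) ->
  forall x, f (iter B f x) = iter B f x.
Proof.
move=> muB mu_f x.
have fixed_or_far i : f (iter i f x) = iter i f x \/ i <= mu (iter i f x).
  elim: i => [|i [fix_i|far_i]] /=; first by right.
    by left; rewrite fix_i.
  have [fix_i|move_i] := eqVneq (f (iter i f x)) (iter i f x).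
    by left; rewrite fix_i.
  by right; exact: leq_trans (mu_f _ move_i).
by case: (fixed_or_far B) => // far; move: (muB (iter B f x)); rewrite ltnNge far.
Qed.

Definition interval_closed n (G : rel 'I_n) :=
  forall a b d : 'I_n, a < b -> b < d -> G a d -> G a b && G b d.

Section Runs.
Variables (n : nat) (G : rel 'I_n) (H : {set 'I_n}).
Hypothesis G_interval : interval_closed G.
Hypothesis H_triangle_free : forall u v w : 'I_n, u \in H -> v \in H -> w \in H ->
  u < v -> v < w -> G u v -> G v w -> G u w -> False.

Definition run_edge v w := [&& v \in H, w \in H, v < w & G v w].
Definition has_next v := [exists w, run_edge v w].
Definition has_prev v := [exists w, run_edge w v].
Definition run_next v := if [pick w | run_edge v w] is Some w then w else v.
Definition run_prev v := if [pick w | run_edge w v] is Some w then w else v.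
(* [n] steps suffice: [run_next] climbs strictly until the top of the run. *)
Definition run_top v := iter n run_next v.
Definition run_bot v := iter n run_prev v.

Lemma run_edge_next_uniq v w1 w2 : run_edge v w1 -> run_edge v w2 -> w1 = w2.
Proof.
wlog lt12 : w1 w2 / w1 < w2.
  move=> wlog_lt e1 e2; case: (ltngtP w1 w2) => [lt12|lt21|/val_inj //].
    exact: wlog_lt.
  by apply/esym/wlog_lt.
move=> /and4P [Hv H1 lt1 G1] /and4P [_ H2 _ G2].
have /andP [G01 G12] := G_interval lt1 lt12 G2.
by case: (H_triangle_free Hv H1 H2 lt1 lt12 G01 G12 G2).
Qed.

Lemma run_edge_prev_uniq v w1 w2 : run_edge w1 v -> run_edge w2 v -> w1 = w2.
Proof.
wlog lt12 : w1 w2 / w1 < w2.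
  move=> wlog_lt e1 e2; case: (ltngtP w1 w2) => [lt12|lt21|/val_inj //].
    exact: wlog_lt.
  by apply/esym/wlog_lt.
move=> /and4P [H1 Hv _ G1] /and4P [H2 _ lt2 G2].
have /andP [G12 G2v] := G_interval lt12 lt2 G1.
by case: (H_triangle_free H1 H2 Hv lt12 lt2 G12 G2 G1).
Qed.

Lemma run_nextE v w : run_edge v w -> run_next v = w.
Proof.
rewrite /run_next => e; case: pickP => [w' e'|/(_ w)]; last by rewrite e.
exact: run_edge_next_uniq e' e.
Qed.

Lemma run_prevE v w : run_edge w v -> run_prev v = w.
Proof.
rewrite /run_prev => e; case: pickP => [w' e'|/(_ w)]; last by rewrite e.
exact: run_edge_prev_uniq e' e.
Qed.

Lemma run_next_edge v : has_next v -> run_edge v (run_next v).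
Proof. by case/existsP => w e; rewrite (run_nextE e). Qed.

Lemma run_prev_edge v : has_prev v -> run_edge (run_prev v) v.
Proof. by case/existsP => w e; rewrite (run_prevE e). Qed.

Lemma run_next_id v : ~~ has_next v -> run_next v = v.
Proof.
rewrite /run_next => /existsPn no_next; case: pickP => // w e.
by move: (no_next w); rewrite e.
Qed.

Lemma run_prev_id v : ~~ has_prev v -> run_prev v = v.
Proof.
rewrite /run_prev => /existsPn no_prev; case: pickP => // w e.
by move: (no_prev w); rewrite e.
Qed.

Lemma run_nextK v : has_next v -> run_prev (run_next v) = v.
Proof. by move/run_next_edge/run_prevE. Qed.

Lemma run_prevK v : has_prev v -> run_next (run_prev v) = v.
Proof. by move/run_prev_edge/run_nextE. Qed.

Lemma run_next_top v : run_next (run_top v) = run_top v.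
Proof.
apply: (@iter_measure_fixed _ _ val) => [x|x]; first exact: ltn_ord.
by case: (boolP (has_next x)) => [/run_next_edge/and4P [] | /run_next_id ->] //; rewrite eqxx.
Qed.

Lemma run_prev_bot v : run_prev (run_bot v) = run_bot v.
Proof.
apply: (@iter_measure_fixed _ _ (fun x : 'I_n => n - x.+1)) => [x|x].
  by have := ltn_ord x; lia.
case: (boolP (has_prev x)) => [/run_prev_edge/and4P [_ _ lt _] _ | /run_prev_id ->].
  by have := ltn_ord x; lia.
by rewrite eqxx.
Qed.

Lemma run_top_last v : ~~ has_next (run_top v).
Proof.
by apply/negP => /run_next_edge; rewrite run_next_top /run_edge ltnn !andbF.
Qed.

Lemma run_bot_first v : ~~ has_prev (run_bot v).
Proof.
by apply/negP => /run_prev_edge; rewrite run_prev_bot /run_edge ltnn !andbF.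
Qed.

Lemma run_top_id v : ~~ has_next v -> run_top v = v.
Proof. by move/run_next_id; exact: iter_fix. Qed.

Lemma run_bot_id v : ~~ has_prev v -> run_bot v = v.
Proof. by move/run_prev_id; exact: iter_fix. Qed.

Definition run_invariant (U : Type) (F : 'I_n -> U) :=
  (forall v, F (run_next v) = F v) /\ (forall v, F (run_prev v) = F v).

Lemma run_invariant_top U (F : 'I_n -> U) : run_invariant F -> forall v, F (run_top v) = F v.
Proof. by case=> F_next _; exact: iter_invariant. Qed.

Lemma run_invariant_bot U (F : 'I_n -> U) : run_invariant F -> forall v, F (run_bot v) = F v.
Proof. by case=> _ F_prev; exact: iter_invariant. Qed.

Lemma mem_run_invariant : run_invariant (fun v => v \in H).
Proof.
split=> v.
  by case: (boolP (has_next v)) => [/run_next_edge/and4P [-> ->] | /run_next_id ->].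
by case: (boolP (has_prev v)) => [/run_prev_edge/and4P [-> ->] | /run_prev_id ->].
Qed.

Lemma run_top_invariant : run_invariant run_top.
Proof.
have top_next v : run_top (run_next v) = run_top v.
  by rewrite /run_top -iterSr /= run_next_top.
split=> // v; case: (boolP (has_prev v)) => [prev_v | /run_prev_id -> //].
by rewrite -{2}(run_prevK prev_v) top_next.
Qed.

Lemma run_bot_invariant : run_invariant run_bot.
Proof.
have bot_prev v : run_bot (run_prev v) = run_bot v.
  by rewrite /run_bot -iterSr /= run_prev_bot.
split=> // v; case: (boolP (has_next v)) => [next_v | /run_next_id -> //].
by rewrite -{2}(run_nextK next_v) bot_prev.
Qed.

End Runs.

Lemma proper_colP n N (G : rel 'I_n) (k : {ffun 'I_n -> 'I_N}) i j :
  proper_col G k -> G i j -> k i != k j.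
Proof. by move=> /forallP /(_ i) /forallP /(_ j) /implyP. Qed.

Section AdjacentColourSwap.
Variables (n N : nat) (G : rel 'I_n) (c c' : 'I_N).
Hypothesis G_sym : symmetric G.
Hypothesis G_interval : interval_closed G.
Hypothesis c'_succ : (c' : nat) = c.+1.

Local Notation sw := (tperm c c').

Definition paired (d : 'I_N) := (d == c) || (d == c').
Definition pair_set (k : {ffun 'I_n -> 'I_N}) := [set v | paired (k v)].

Lemma paired_tperm d : paired (sw d) = paired d.
Proof. by rewrite /paired; case: tpermP => [->|->|//]; rewrite !eqxx ?orbT. Qed.

Lemma tperm_unpaired d : ~~ paired d -> sw d = d.
Proof. by rewrite negb_or => /andP [dc dc']; rewrite tpermD // eq_sym. Qed.

Lemma paired_other a b : paired a -> paired b -> a != b -> b = sw a.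
Proof.
by case/orP => /eqP-> /orP [] /eqP->; rewrite ?eqxx // => _; rewrite ?tpermL ?tpermR.
Qed.

(* No colour lies strictly between c and c' = c + 1. *)
Lemma ltn_paired_unpaired x y z : paired x -> paired y -> ~~ paired z ->
  ((x < z) = (y < z)) * ((z < x) = (z < y)).
Proof.
have val_paired w : paired w -> (w : nat) = c \/ (w : nat) = c.+1.
  by case/orP => /eqP->; [left|right].
move=> /val_paired hx /val_paired hy; rewrite negb_or -!val_eqE /= c'_succ.
by case/andP => hz hz'; split; apply/idP/idP; lia.
Qed.

Lemma pair_set_triangle_free k : proper_col G k ->
  forall u v w : 'I_n, u \in pair_set k -> v \in pair_set k -> w \in pair_set k ->
  u < v -> v < w -> G u v -> G v w -> G u w -> False.
Proof.
move=> k_proper u v w; rewrite !inE => Hu Hv Hw _ _ Guv Gvw Guw.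
move: (proper_colP k_proper Guv) (proper_colP k_proper Gvw) (proper_colP k_proper Guw).
by move: Hu Hv Hw; do 3!case/orP=> /eqP->; rewrite ?eqxx.
Qed.

(* The colours alternate along a run, so its ends have the same colour exactly
   when the run has an odd number of vertices. *)
Definition odd_run k v :=
  (v \in pair_set k) && (k (run_top G (pair_set k) v) == k (run_bot G (pair_set k) v)).
Definition even_run k v :=
  (v \in pair_set k) && ~~ odd_run k v.

Definition swap_odd_runs k : {ffun 'I_n -> 'I_N} :=
  [ffun v => if odd_run k v then sw (k v) else k v].

Lemma paired_swap_odd_runs k v : paired (swap_odd_runs k v) = paired (k v).
Proof. by rewrite ffunE; case: ifP; rewrite ?paired_tperm. Qed.

Lemma pair_set_swap k : pair_set (swap_odd_runs k) = pair_set k.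
Proof. by apply/setP => v; rewrite !inE paired_swap_odd_runs. Qed.

Definition ascent_pair (k : {ffun 'I_n -> 'I_N}) (p : 'I_n * 'I_n) :=
  [&& p.1 < p.2, G p.1 p.2 & k p.1 < k p.2].

Section ProperColouring.
Variable k : {ffun 'I_n -> 'I_N}.
Hypothesis k_proper : proper_col G k.

Local Notation H := (pair_set k).
Local Notation run_edge := (run_edge G H).
Local Notation has_next := (has_next G H).
Local Notation has_prev := (has_prev G H).
Local Notation next := (run_next G H).
Local Notation prev := (run_prev G H).
Local Notation top := (run_top G H).
Local Notation bot := (run_bot G H).
Let H_triangle_free := pair_set_triangle_free k_proper.
Let run_nextE := run_nextE G_interval H_triangle_free.
Let run_next_edge := run_next_edge G_interval H_triangle_free.
Let run_prev_edge := run_prev_edge G_interval H_triangle_free.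
Let run_nextK := run_nextK G_interval H_triangle_free.
Let run_prevK := run_prevK G_interval H_triangle_free.
Let run_top_last := run_top_last G_interval H_triangle_free.
Let run_bot_first := run_bot_first G_interval H_triangle_free.
Let mem_run_invariant := mem_run_invariant G_interval H_triangle_free.
Let run_top_invariant := run_top_invariant G_interval H_triangle_free.
Let run_bot_invariant := run_bot_invariant G_interval H_triangle_free.

Lemma run_next_colour v : has_next v -> k (next v) = sw (k v).
Proof.
move=> /run_next_edge /and4P [Hv Hnext _ Gvnext].
rewrite !inE in Hv Hnext.
by apply: paired_other => //; exact: proper_colP Gvnext.
Qed.

Lemma odd_run_invariant : run_invariant G H (odd_run k).
Proof.
have [mem_next mem_prev] := mem_run_invariant.
have [top_next top_prev] := run_top_invariant.
have [bot_next bot_prev] := run_bot_invariant.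
by split=> v; rewrite /odd_run ?mem_next ?top_next ?bot_next ?mem_prev ?top_prev ?bot_prev.
Qed.

Lemma even_run_invariant : run_invariant G H (even_run k).
Proof.
have [mem_next mem_prev] := mem_run_invariant.
have [odd_next odd_prev] := odd_run_invariant.
by split=> v; rewrite /even_run ?mem_next ?odd_next ?mem_prev ?odd_prev.
Qed.

Lemma odd_run_swap : odd_run (swap_odd_runs k) =1 odd_run k.
Proof.
move=> v; rewrite /odd_run pair_set_swap !ffunE.
rewrite (run_invariant_top odd_run_invariant).
rewrite (run_invariant_bot odd_run_invariant).
by case: (odd_run k v); rewrite ?(inj_eq perm_inj).
Qed.

Lemma swap_odd_runsK : swap_odd_runs (swap_odd_runs k) = k.
Proof.
by apply/ffunP => v; rewrite !ffunE odd_run_swap; case: (odd_run k v); rewrite ?tpermK.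
Qed.

Lemma odd_run_edge i j : i \in H -> j \in H -> G i j -> odd_run k i = odd_run k j.
Proof.
have [odd_next _] := odd_run_invariant.
wlog lt_ij : i j / i < j.
  move=> wlog_lt Hi Hj Gij; case: (ltngtP i j) => [lt|lt|/val_inj-> //].
    exact: wlog_lt.
  by apply/esym/wlog_lt; rewrite // G_sym.
move=> Hi Hj Gij; have e : run_edge i j by apply/and4P.
by rewrite -(run_nextE e) odd_next.
Qed.

Lemma swap_odd_runs_proper : proper_col G (swap_odd_runs k).
Proof.
have mem_swap v : (v \in H) = paired (swap_odd_runs k v).
  by rewrite inE paired_swap_odd_runs.
apply/forallP => i; apply/forallP => j; apply/implyP => Gij.
have kij := proper_colP k_proper Gij.
have [Hi|Hi] := boolP (i \in H); have [Hj|Hj] := boolP (j \in H).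
- rewrite !ffunE (odd_run_edge Hi Hj Gij).
  by case: (odd_run k j); rewrite ?(inj_eq perm_inj).
- by apply: contraNneq Hj => e; rewrite mem_swap -e -mem_swap.
- by apply: contraNneq Hi => e; rewrite mem_swap e -mem_swap.
- by rewrite !ffunE /odd_run (negbTE Hi) (negbTE Hj).
Qed.

Lemma card_run_next (Q : pred 'I_n) a : run_invariant G H Q -> paired a ->
  #|[set v | Q v && (k v == a) && has_next v]| =
  #|[set v | Q v && (k v == sw a) && has_prev v]|.
Proof.
case=> Q_next _ pa; apply: (card_in_bij (f := next) (g := prev)) => v; rewrite !inE.
- case/andP => /andP [Qv /eqP kv] next_v.
  rewrite Q_next Qv run_next_colour // kv eqxx /=.
  by apply/existsP; exists v; exact: run_next_edge.
- case/andP => /andP [Qv /eqP kv] prev_v.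
  have next_prev : has_next (prev v) by apply/existsP; exists v; exact: run_prev_edge.
  have := run_next_colour next_prev; rewrite run_prevK // kv => /perm_inj <-.
  by rewrite -Q_next run_prevK // Qv eqxx next_prev.
- by case/andP => _ /run_nextK.
- by case/andP => _ /run_prevK.
Qed.

Lemma card_run_ends (Q : pred 'I_n) a b : run_invariant G H Q ->
  (forall v, Q v -> (k (top v) == a) = (k (bot v) == b)) ->
  #|[set v | Q v && (k v == a) && ~~ has_next v]| =
  #|[set v | Q v && (k v == b) && ~~ has_prev v]|.
Proof.
move=> Q_inv ends; apply: (card_in_bij (f := bot) (g := top)) => v; rewrite !inE.
- case/andP => /andP [Qv kv] last_v.
  by rewrite (run_invariant_bot Q_inv) Qv -ends // (run_top_id last_v) kv run_bot_first.
- case/andP => /andP [Qv kv] first_v.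
  by rewrite (run_invariant_top Q_inv) Qv ends // (run_bot_id first_v) kv run_top_last.
- by case/andP => _ last_v; rewrite (run_invariant_bot run_top_invariant) run_top_id.
- by case/andP => _ first_v; rewrite (run_invariant_top run_bot_invariant) run_bot_id.
Qed.

Lemma card_even_run a : paired a ->
  #|[set v | even_run k v && (k v == a)]| = #|[set v | even_run k v && (k v == sw a)]|.
Proof.
move=> pa; rewrite [LHS](card_setID _ has_next) [RHS](card_setID _ has_prev) /=.
rewrite card_run_next //; last exact: even_run_invariant.
congr (_ + _); apply: card_run_ends; first exact: even_run_invariant.
move=> v /andP [Hv]; rewrite /odd_run Hv /= => ends_differ.
have Htop : top v \in H by rewrite (run_invariant_top mem_run_invariant).
have Hbot : bot v \in H by rewrite (run_invariant_bot mem_run_invariant).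
rewrite !inE in Htop Hbot.
by rewrite (paired_other Htop Hbot ends_differ) (inj_eq perm_inj).
Qed.

Lemma card_swap_colour d :
  #|[set v | swap_odd_runs k v == d]| = #|[set v | k v == sw d]|.
Proof.
have [pd|upd] := boolP (paired d); last first.
  have neq x : paired x -> (x == d) = false by move=> px; apply: contraNF upd => /eqP <-.
  rewrite tperm_unpaired //; apply: eq_card => v; rewrite !inE ffunE.
  by case: ifP => // /andP [Hv _]; rewrite inE in Hv; rewrite !neq ?paired_tperm.
rewrite (card_setID _ (odd_run k)) [RHS](card_setID _ (odd_run k)) /=.
congr (_ + _).
  apply: eq_card => v; rewrite !inE ffunE; case: (odd_run k v); rewrite ?andbT ?andbF //.
  by rewrite (can2_eq (tpermK c c') (tpermK c c')).
have even_runE x : paired x ->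
    [set v | (k v == x) && ~~ odd_run k v] =i [set v | even_run k v && (k v == x)].
  move=> px v; rewrite /even_run !inE.
  by case: eqP => [->|]; rewrite ?px ?andbT ?andbF.
transitivity #|[set v | (k v == d) && ~~ odd_run k v]|.
  by apply: eq_card => v; rewrite !inE ffunE; case: (odd_run k v); rewrite ?andbF.
rewrite !(eq_card (even_runE _ _)) ?paired_tperm //; exact: card_even_run.
Qed.

Lemma ltn_swap_odd_runs i j : ~~ ((i \in H) && (j \in H)) ->
  (swap_odd_runs k i < swap_odd_runs k j) = (k i < k j).
Proof.
have outside v : v \notin H -> swap_odd_runs k v = k v.
  by move=> Hv; rewrite ffunE /odd_run (negbTE Hv).
move=> not_both; have [Hi|Hi] := boolP (i \in H); have [Hj|Hj] := boolP (j \in H).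
- by rewrite Hi Hj in not_both.
- rewrite (outside j Hj); rewrite !inE in Hi Hj.
  by rewrite (ltn_paired_unpaired _ Hi Hj).1 // paired_swap_odd_runs.
- rewrite (outside i Hi); rewrite !inE in Hi Hj.
  by rewrite (ltn_paired_unpaired _ Hj Hi).2 // paired_swap_odd_runs.
- by rewrite !outside.
Qed.

(* Inside a run every edge is {v, run_next v}, an ascent iff v has colour c. *)
Lemma card_ascents_in_runs :
  #|[set p | ascent_pair k p && ((p.1 \in H) && (p.2 \in H))]| =
  #|[set v | (k v == c) && has_next v]|.
Proof.
apply: (card_in_bij (f := fst) (g := fun v => (v, next v))) => [[i j]|v|[i j]|v];
  rewrite !inE /=.
- case/and3P => /and3P [lt_ij Gij kij] Hi Hj.
  have -> : has_next i by apply/existsP; exists j; rewrite /run_edge !inE Hi Hj lt_ij.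
  have := paired_other Hi Hj (proper_colP k_proper Gij).
  case/orP: Hi kij => /eqP->; first by rewrite eqxx.
  by rewrite tpermR /= => + kj; rewrite kj c'_succ; lia.
- case/andP => /eqP kv next_v; have /and4P [Hv Hnext lt_v G_v] := run_next_edge next_v.
  rewrite !inE in Hv Hnext.
  by rewrite /ascent_pair /= lt_v G_v Hv Hnext run_next_colour // kv tpermL c'_succ ltnSn.
- case/and3P => /and3P [lt_ij Gij _] Hi Hj.
  by rewrite (@run_nextE i j) // /run_edge !inE Hi Hj lt_ij.
- by [].
Qed.

Lemma asc_split : asc G k =
  #|[set p | ascent_pair k p && ~~ ((p.1 \in H) && (p.2 \in H))]| +
  #|[set v | (k v == c) && has_next v]|.
Proof.
transitivity #|[set p | ascent_pair k p]|; first by apply: eq_card => p; rewrite !inE.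
by rewrite (card_setID _ (fun p => (p.1 \in H) && (p.2 \in H))) card_ascents_in_runs addnC.
Qed.

Lemma card_run_ascents_swap :
  #|[set v | (swap_odd_runs k v == c) && has_next v]| =
  #|[set v | (k v == c) && has_next v]|.
Proof.
pose odd_c' v := odd_run k v && (k v == c').
have next_prev : #|[set v | odd_c' v && has_next v]| = #|[set v | odd_c' v && has_prev v]|.
  have := card_setID odd_c' has_next; rewrite (card_setID odd_c' has_prev).
  rewrite (card_run_ends (a := c') (b := c') odd_run_invariant) => [/esym/addIn //|v].
  by case/andP => _ /eqP->.
rewrite [LHS](card_setID _ (odd_run k)) [RHS](card_setID _ (odd_run k)) /=.
congr (_ + _); last first.
  by apply: eq_card => v; rewrite !inE ffunE; case: (odd_run k v); rewrite ?andbF.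
transitivity #|[set v | odd_c' v && has_next v]|.
  apply: eq_card => v; rewrite !inE ffunE /odd_c'.
  case: (odd_run k v); rewrite ?andbF //= (can2_eq (tpermK c c') (tpermK c c')) tpermL.
  by rewrite andbC.
have paired_c : paired c by rewrite /paired eqxx.
rewrite next_prev.
transitivity #|[set v | odd_run k v && (k v == c) && has_next v]|.
  by rewrite (card_run_next odd_run_invariant paired_c) tpermL.
by apply: eq_card => v; rewrite !inE; case: (odd_run k v); rewrite ?andbT ?andbF.
Qed.

End ProperColouring.

Lemma asc_swap_odd_runs k : proper_col G k -> asc G (swap_odd_runs k) = asc G k.
Proof.
move=> k_proper; rewrite (asc_split k_proper) (asc_split (swap_odd_runs_proper k_proper)).
rewrite pair_set_swap card_run_ascents_swap //; congr (_ + _).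
apply: eq_card => p; rewrite !inE /ascent_pair.
have [_|not_both] := boolP (paired (k p.1) && paired (k p.2)); first by rewrite !andbF.
by rewrite ltn_swap_odd_runs // !inE.
Qed.

Definition swap_proper_odd_runs k := if proper_col G k then swap_odd_runs k else k.

Lemma swap_proper_odd_runsK : involutive swap_proper_odd_runs.
Proof.
move=> k; rewrite {2}/swap_proper_odd_runs; case: ifP => [k_proper|k_improper].
  by rewrite /swap_proper_odd_runs swap_odd_runs_proper // swap_odd_runsK.
by rewrite /swap_proper_odd_runs k_improper.
Qed.

Lemma chromQS_coef_tperm_adjacent (alpha : 'I_N -> nat) :
  chromQS_coef G alpha = chromQS_coef G (alpha \o sw).
Proof.
rewrite /chromQS_coef (reindex_inj (inv_inj swap_proper_odd_runsK)).
apply: eq_big => k; rewrite /swap_proper_odd_runs; case: ifP => [k_proper|-> //].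
  rewrite swap_odd_runs_proper //=; apply/forallP/forallP => content d.
    by move: (content (sw d)); rewrite card_swap_colour // tpermK.
  by move: (content (sw d)); rewrite card_swap_colour // /= tpermK.
by rewrite asc_swap_odd_runs.
Qed.

End AdjacentColourSwap.

Lemma eq_chromQS_coef n N (G : rel 'I_n) (alpha beta : 'I_N -> nat) :
  alpha =1 beta -> chromQS_coef G alpha = chromQS_coef G beta.
Proof.
by move=> e; apply: eq_bigl => k; congr andb; apply: eq_forallb => d; rewrite e.
Qed.

Section ColourPermutations.
Variables (n N : nat) (G : rel 'I_n).
Hypothesis G_sym : symmetric G.
Hypothesis G_interval : interval_closed G.

Definition colour_invariant (s : {perm 'I_N}) :=
  forall alpha : 'I_N -> nat, chromQS_coef G alpha = chromQS_coef G (alpha \o s).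

Lemma colour_invariant1 : colour_invariant 1%g.
Proof. by move=> alpha; apply: eq_chromQS_coef => d; rewrite /= perm1. Qed.

Lemma colour_invariantM s t :
  colour_invariant s -> colour_invariant t -> colour_invariant (s * t)%g.
Proof.
move=> inv_s inv_t alpha; rewrite inv_t inv_s.
by apply: eq_chromQS_coef => d; rewrite /= permM.
Qed.

Lemma colour_invariant_tperm_succ (c c' : 'I_N) :
  (c' : nat) = c.+1 -> colour_invariant (tperm c c').
Proof. exact: chromQS_coef_tperm_adjacent. Qed.

(* tperm i (j + 1) is the conjugate of tperm i j by tperm j (j + 1). *)
Lemma colour_invariant_tperm (i j : 'I_N) : colour_invariant (tperm i j).
Proof.
wlog lt_ij : i j / i < j.
  move=> wlog_lt; case: (ltngtP i j) => [|lt_ji|/val_inj->]; first exact: wlog_lt.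
    by rewrite tpermC; exact: wlog_lt.
  by rewrite tperm1; exact: colour_invariant1.
move: (j - i.+1) (subnKC lt_ij) => d; elim: d j {lt_ij} => [|d IH] j j_eq.
  by apply: colour_invariant_tperm_succ; rewrite -j_eq addn0.
have lt_j1 : i.+1 + d < N by have := ltn_ord j; lia.
pose j1 := Ordinal lt_j1.
have -> : tperm i j = (tperm i j1 ^ tperm j1 j)%g.
  by rewrite tpermJ tpermL tpermD // -val_eqE /=; lia.
rewrite conjgE tpermV; have j_succ : (j : nat) = j1.+1 by rewrite /= -j_eq addnS.
apply: colour_invariantM; first exact: colour_invariant_tperm_succ.
by apply: colour_invariantM; [exact: IH | exact: colour_invariant_tperm_succ].
Qed.

Lemma colour_invariant_perm s : colour_invariant s.
Proof.
have [ts -> _] := prod_tpermP s; elim: ts => [|t ts IH].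
  by rewrite big_nil; exact: colour_invariant1.
by rewrite big_cons; apply: colour_invariantM => //; exact: colour_invariant_tperm.
Qed.

End ColourPermutations.

Lemma ltn_rev_ord N (x y : 'I_N) : (rev_ord x < rev_ord y) = (y < x).
Proof. by have := ltn_ord x; have := ltn_ord y; rewrite /= => ? ?; apply/idP/idP; lia. Qed.

Section VertexReversal.
Variables (n N : nat) (G : rel 'I_n).
Hypothesis G_sym : symmetric G.

Definition rev_rel (R : rel 'I_n) : rel 'I_n := fun x y => R (rev_ord x) (rev_ord y).
Definition rev_colouring (k : {ffun 'I_n -> 'I_N}) : {ffun 'I_n -> 'I_N} :=
  [ffun v => rev_ord (k (rev_ord v))].

Lemma rev_colouringK : involutive rev_colouring.
Proof. by move=> k; apply/ffunP => v; rewrite !ffunE !rev_ordK. Qed.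

Lemma proper_col_rev k : proper_col (rev_rel G) (rev_colouring k) = proper_col G k.
Proof.
apply/forallP/forallP => proper_k i; apply/forallP => j; apply/implyP => Gij.
  move: (proper_k (rev_ord i)) => /forallP /(_ (rev_ord j)) /implyP.
  by rewrite /rev_rel !ffunE !rev_ordK (inj_eq rev_ord_inj); exact.
rewrite !ffunE (inj_eq rev_ord_inj).
by move: (proper_k (rev_ord i)) => /forallP /(_ (rev_ord j)) /implyP; exact.
Qed.

Lemma asc_rev k : asc (rev_rel G) (rev_colouring k) = asc G k.
Proof.
pose flip (p : 'I_n * 'I_n) := (rev_ord p.2, rev_ord p.1).
have flipK : involutive flip by move=> [i j]; rewrite /flip /= !rev_ordK.
apply: (card_in_bij (f := flip) (g := flip)) => [[i j]|[i j]|p _|p _]; rewrite ?flipK //.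
all: rewrite !inE /flip /rev_rel !ffunE; cbn [fst snd].
all: by rewrite ?rev_ordK !ltn_rev_ord G_sym.
Qed.

Lemma card_rev_colouring k d :
  #|[set v | rev_colouring k v == d]| = #|[set v | k v == rev_ord d]|.
Proof.
apply: (card_in_bij (f := @rev_ord n) (g := @rev_ord n)) => v; rewrite ?rev_ordK // !inE ffunE.
  by rewrite -(inj_eq rev_ord_inj) !rev_ordK.
by rewrite rev_ordK -(inj_eq rev_ord_inj) rev_ordK.
Qed.

Lemma chromQS_coef_rev (alpha : 'I_N -> nat) :
  chromQS_coef (rev_rel G) alpha = chromQS_coef G (alpha \o @rev_ord N).
Proof.
rewrite /chromQS_coef (reindex_inj (inv_inj rev_colouringK)).
apply: eq_big => k; last by rewrite asc_rev.
rewrite proper_col_rev; congr andb; apply/forallP/forallP => content d.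
  by move: (content (rev_ord d)); rewrite card_rev_colouring !rev_ordK.
by rewrite card_rev_colouring; move: (content (rev_ord d)); rewrite /= rev_ordK.
Qed.

End VertexReversal.

Lemma eq_chromQS_coef_rel n N (G1 G2 : rel 'I_n) (alpha : 'I_N -> nat) :
  G1 =2 G2 -> chromQS_coef G1 alpha = chromQS_coef G2 alpha.
Proof.
move=> e; apply: eq_big => k.
  by congr andb; apply: eq_forallb => i; apply: eq_forallb => j; rewrite e.
by move=> _; rewrite /asc; congr (GRing.exp 'X); apply: eq_card => p; rewrite !inE e.
Qed.

(* The lattice path [s] from the origin (true = North step) visits a point
   (x, y) with x < b and y >= a. *)
Definition reaches (s : seq bool) (a b : nat) :=
  exists k, a <= count id (take k s) /\ count negb (take k s) < b.

Lemma reaches_nil a b : reaches [::] a b <-> a = 0 /\ 0 < b.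
Proof. by split=> [[k] /=|[-> b_gt0]]; [lia | exists 0]. Qed.

Lemma reaches_N s a b : reaches (true :: s) a b <-> (a = 0 /\ 0 < b) \/ reaches s a.-1 b.
Proof.
split=> [[[|k] /=]|[[-> b_gt0]|[k]]]; first by left; lia.
- by right; exists k; lia.
- by exists 0.
- by exists k.+1 => /=; lia.
Qed.

Lemma reaches_E s a b : reaches (false :: s) a b <-> (a = 0 /\ 0 < b) \/ reaches s a b.-1.
Proof.
split=> [[[|k] /=]|[[-> b_gt0]|[k]]]; first by left; lia.
- by right; exists k; lia.
- by exists 0.
- by exists k.+1 => /=; lia.
Qed.

Lemma reaches_nseqN d s a b :
  reaches (nseq d true ++ s) a b <-> (a <= d /\ 0 < b) \/ reaches s (a - d) b.
Proof.
elim: d a => [|d IH] a /=.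
  rewrite subn0; split=> [|[[a0 b0]|//]]; first by right.
  by exists 0; rewrite take0 /=; lia.
rewrite reaches_N IH (_ : a.-1 - d = a - d.+1); last by lia.
split=> [[[-> b0]|[[a_le b0]|reach]]|[[a_le b0]|reach]].
- by left.
- by left; split; lia.
- by right.
- by case: a a_le => [|a] a_le; [left | right; left; split; lia].
- by right; right.
Qed.

Definition rises_path (ds : seq nat) := flatten [seq rcons (nseq d true) false | d <- ds].

Lemma reaches_rises_path ds a b :
  reaches (rises_path ds) a b <-> 0 < b /\ a <= sumn (take b ds).
Proof.
elim: ds a b => [|d ds IH] a b.
  by rewrite reaches_nil /=; split=> [[]|[]]; lia.
rewrite /rises_path /= cat_rcons -/(rises_path ds) reaches_nseqN reaches_E IH.
case: b => [|[|b]] /=; rewrite ?take0 /=; split; lia.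
Qed.

Lemma count_rises_path ds :
  count id (rises_path ds) = sumn ds /\ count negb (rises_path ds) = size ds.
Proof.
elim: ds => [|d ds [IHN IHE]] //=.
rewrite /rises_path /= -/(rises_path ds) !count_cat -cats1 !count_cat !count_nseq /= IHN IHE.
by split; lia.
Qed.

Lemma sumn_take_pairmap_sub (h : seq nat) x0 b : sorted leq (x0 :: h) -> b <= size h ->
  sumn (take b (pairmap (fun x y => y - x) x0 h)) + x0 = nth x0 (x0 :: h) b.
Proof.
elim: h x0 b => [|y h IH] x0 [|b] //= /andP [le_x0y sorted_h] b_le.
rewrite (set_nth_default y x0) // -(IH y b sorted_h b_le); lia.
Qed.

(* Reflection about y = n - x maps the quadrant {x < B, y >= A} to
   {x <= n - A, y >= n + 1 - B}. *)
Lemma reaches_reflect s n A B : count id s = n -> count negb s = n -> A <= n ->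
  reaches (rev (map negb s)) A B <-> reaches s (n.+1 - B) (n.+1 - A).
Proof.
move=> countN countE A_le.
have size_s : size s = n + n by rewrite -(count_predC id s) countN -countE.
have splitN j : count id (take j s) + count id (drop j s) = n.
  by rewrite -count_cat cat_take_drop.
have splitE j : count negb (take j s) + count negb (drop j s) = n.
  by rewrite -count_cat cat_take_drop.
have take_rev_count k :
    count id (take k (rev (map negb s))) = count negb (drop (size s - k) s) /\
    count negb (take k (rev (map negb s))) = count id (drop (size s - k) s).
  rewrite take_rev size_map -map_drop !count_rev !count_map.
  by split; apply: eq_count => x; rewrite /= ?negbK.
split=> [[k]|[j]].
  have [-> ->] := take_rev_count k.
  by exists (size s - k); have := splitN (size s - k); have := splitE (size s - k); lia.
have [j_le|j_gt] := leqP j (n + n); last first.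
  have -> : take j s = s by apply: take_oversize; rewrite size_s ltnW.
  rewrite countN countE => reach.
  by exists 0; rewrite take0 /=; lia.
exists (n + n - j); have [-> ->] := take_rev_count (n + n - j).
by rewrite size_s subKn //; have := splitN j; have := splitE j; lia.
Qed.

Section NaturalUnitIntervalOrder.
Variables (n : nat) (m : seq nat).
Hypothesis m_nuio : nuio n m.

Lemma nuio_size : size m = n.-1.
Proof. by case/and4P: m_nuio => /eqP. Qed.

Lemma nuio_sorted_heights : sorted leq (0 :: rcons m n).
Proof.
case/and4P: m_nuio => _ sorted_m bounded _ /=; rewrite rcons_path.
apply/andP; split; first by case: m sorted_m {bounded}.
by have := mem_last 0 m; rewrite inE => /orP [/eqP-> //|/(allP bounded)].
Qed.

Lemma sumn_take_rises b : b <= n ->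
  sumn (take b (pairmap (fun x y => y - x) 0 (rcons m n))) = nth 0 (0 :: rcons m n) b.
Proof.
move=> b_le; rewrite -[LHS]addn0 sumn_take_pairmap_sub ?nuio_sorted_heights //.
by rewrite size_rcons nuio_size; lia.
Qed.

Lemma count_catalan_path : 0 < n ->
  count id (catalan_path n m) = n /\ count negb (catalan_path n m) = n.
Proof.
move=> n_gt0; rewrite /catalan_path -/(rises_path _).
have [-> ->] := count_rises_path (pairmap (fun x y => y - x) 0 (rcons m n)).
have := sumn_take_rises (leqnn n).
rewrite take_oversize; last by rewrite size_pairmap size_rcons nuio_size; lia.
rewrite size_pairmap size_rcons nuio_size => ->; move: n_gt0 nuio_size.
by case: (n) => [|n'] //= _ size_m; rewrite nth_rcons size_m ltnn eqxx.
Qed.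

Lemma inc_graph_lt (a b : 'I_n) : a < b -> inc_graph m a b = (b < nth 0 m a).
Proof. by move=> lt_ab; rewrite /inc_graph lt_ab (leq_gtF (ltnW lt_ab)) orbF. Qed.

Lemma inc_graph_interval_closed : interval_closed (@inc_graph n m).
Proof.
move=> a b d lt_ab lt_bd; rewrite !inc_graph_lt //; last exact: ltn_trans lt_bd.
move=> lt_dm; rewrite (ltn_trans lt_bd lt_dm) /=; apply: leq_trans lt_dm _.
case/and4P: m_nuio => _ sorted_m _ _.
apply: (sorted_leq_nth leq_trans leqnn 0 sorted_m); rewrite ?inE ?nuio_size //;
  by have := ltn_ord d; lia.
Qed.

Lemma inc_graph_reaches (a b : 'I_n) : a < b ->
  inc_graph m a b <-> reaches (catalan_path n m) b.+1 a.+1.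
Proof.
move=> lt_ab; rewrite inc_graph_lt // /catalan_path -/(rises_path _) reaches_rises_path.
rewrite sumn_take_rises /= ?nth_rcons ?nuio_size; last by have := ltn_ord a; lia.
have -> : a < n.-1 by have := ltn_ord b; lia.
by split=> [|[]].
Qed.

End NaturalUnitIntervalOrder.

Lemma inc_graph_sym n m : symmetric (@inc_graph n m).
Proof. by move=> a b; rewrite /inc_graph orbC. Qed.

Lemma inc_graph_irrefl n m : irreflexive (@inc_graph n m).
Proof. by move=> a; rewrite /inc_graph ltnn. Qed.

Lemma inc_graph_reflect n m m' : 0 < n -> nuio n m -> nuio n m' ->
  catalan_path n m' = reflect_path (catalan_path n m) ->
  inc_graph m' =2 rev_rel (@inc_graph n m).
Proof.
move=> n_gt0 m_nuio m'_nuio reflected.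
have [countN countE] := count_catalan_path m_nuio n_gt0.
have inc_lt (a b : 'I_n) : a < b -> inc_graph m' a b <-> rev_rel (@inc_graph n m) a b.
  move=> lt_ab; have lt_rev : rev_ord b < rev_ord a by rewrite ltn_rev_ord.
  rewrite /rev_rel (inc_graph_sym m (rev_ord a)) (inc_graph_reaches m'_nuio lt_ab).
  rewrite (inc_graph_reaches m_nuio lt_rev) reflected /reflect_path.
  rewrite (reaches_reflect _ countN countE) //.
  by rewrite (subSn (ltn_ord a)) (subSn (ltn_ord b)).
move=> a b; case: (ltngtP a b) => [lt_ab|lt_ba|/val_inj->].
- by apply/idP/idP => /(inc_lt _ _ lt_ab).
- by rewrite inc_graph_sym [RHS]inc_graph_sym; apply/idP/idP => /(inc_lt _ _ lt_ba).
- by rewrite /rev_rel !inc_graph_irrefl.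
Qed.

Theorem lemma2p17 (n : nat) (m m' : seq nat) :
  nuio n m -> nuio n m' ->
  catalan_path n m' = reflect_path (catalan_path n m) ->
  forall (N : nat) (alpha : 'I_N -> nat),
    chromQS_coef (@inc_graph n m) alpha = chromQS_coef (@inc_graph n m') alpha.
Proof.
move=> m_nuio m'_nuio reflected N alpha.
case: n m_nuio m'_nuio reflected => [|n] m_nuio m'_nuio reflected.
  by apply: eq_chromQS_coef_rel => -[].
rewrite (eq_chromQS_coef_rel _ (inc_graph_reflect (ltn0Sn n) m_nuio m'_nuio reflected)).
rewrite chromQS_coef_rev; last exact: inc_graph_sym.
rewrite (colour_invariant_perm (inc_graph_sym m) (inc_graph_interval_closed m_nuio)
           (perm (@rev_ord_inj N))).
by apply: eq_chromQS_coef => d; rewrite /= permE.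
Qed.
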